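(* Let $\mathcal A$ be an associative unital $*$-algebra over $\mathbb C$, let $\Omega^1$ be an $\mathcal A$-bimodule, and let $d:\mathcal A\to\Omega^1$ be a $\mathbb C$-linear derivation, i.e. $d(fg)=f\,dg+df\,g$ for all $f,g\in\mathcal A$. Let $\overline{\Omega^1}$ be the complex-conjugate vector space, made into an $\mathcal A$-bimodule by $f\cdot\overline{\beta}\cdot g:=\overline{g^*\beta f^*}$, and let $d^\dagger:\mathcal A\to\overline{\Omega^1}$ be defined by $d^\dagger(f):=-\overline{d(f^* )}$ (this is again a derivation). Let $\omega:\Omega^1\otimes_{\mathbb C}\overline{\Omega^1}\to\mathbb C$ be a linear map satisfying $\omega\big((f\alpha g)\otimes\alpha'\big)=\omega\big(\alpha\otimes(g\alpha' f)\big)$ for all $\alpha\in\Omega^1$, $\alpha'\in\overline{\Omega^1}$, $f,g\in\mathcal A$. Define $\Psi(f\otimes g):=\omega(df\otimes d^\dagger g)-\omega(dg\otimes d^\dagger f)$ for $f,g\in\mathcal A$. Then for all $f_0,f_1,f_2\in\mathcal A$, $$\Psi(f_0f_1\otimes f_2)+\Psi(f_1f_2\otimes f_0)+\Psi(f_2f_0\otimes f_1)=0,$$ i.e. $\Psi$ is a cyclic $2$-cocycle on $\mathcal A$.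
   Context: Complex conjugate space: $\overline{V}$ is $V$ with conjugated scalar multiplication, elements written $\overline{v}$. *)

(* The complex numbers are modelled as R[i] for an
   arbitrary R : realType (every realType is a complete archimedean ordered
   field, i.e. a copy of the reals), with complex conjugation x^*. *)
From HB Require Import structures.
From mathcomp Require Import all_boot all_order all_algebra.
From mathcomp Require Import reals.
From mathcomp Require Export complex.
Set Implicit Arguments. Unset Strict Implicit. Unset Printing Implicit Defensive.
Import Order.TTheory GRing.Theory Num.Theory.
Local Open Scope ring_scope.

Section Defs.
Variable R : realType.
Local Notation C := R[i].

Definition is_star (A : algType C) (star : A -> A) : Prop :=
  [/\ (forall a b, star (a + b) = star a + star b),
      (forall (c : C) a, star (c *: a) = c^* *: star a),
      (forall a b, star (a * b) = star b * star a),
      star 1 = 1 &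
      (forall a, star (star a) = a)].

Definition is_bimodule (A : algType C) (Om : lmodType C)
  (lact : A -> Om -> Om) (ract : Om -> A -> Om) : Prop :=
  (forall f g b, lact (f + g) b = lact f b + lact g b) /\
  (forall f b b', lact f (b + b') = lact f b + lact f b') /\
  (forall (c : C) f b, lact (c *: f) b = c *: lact f b) /\
  (forall (c : C) f b, lact f (c *: b) = c *: lact f b) /\
  (forall f g b, lact (f * g) b = lact f (lact g b)) /\
  (forall b, lact 1 b = b) /\
  (forall f g b, ract b (f + g) = ract b f + ract b g) /\
  (forall f b b', ract (b + b') f = ract b f + ract b' f) /\
  (forall (c : C) f b, ract b (c *: f) = c *: ract b f) /\
  (forall (c : C) f b, ract (c *: b) f = c *: ract b f) /\
  (forall f g b, ract b (f * g) = ract (ract b f) g) /\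
  (forall b, ract b 1 = b) /\
  (forall f g b, lact f (ract b g) = ract (lact f b) g).

(* d is a derivation (Leibniz rule); C-linearity is imposed via {linear _}. *)
Definition is_derivation (A : algType C) (Om : lmodType C)
  (lact : A -> Om -> Om) (ract : Om -> A -> Om) (d : A -> Om) : Prop :=
  forall f g, d (f * g) = lact f (d g) + ract (d f) g.

(* The conjugate space \bar{Om}: its elements \bar{b} are represented by
   b : Om itself (the carrier of \bar{Om} is that of Om), with the
   conjugated scalar multiplication c . \bar b = \bar{c^* b}.
   Bimodule structure: f . \bar b . g := \bar{ g^* b f^* }. *)
Definition conj_lact (A : algType C) (Om : lmodType C) (star : A -> A)
  (lact : A -> Om -> Om) (ract : Om -> A -> Om) (f : A) (b : Om) : Om :=
  ract b (star f).
Definition conj_ract (A : algType C) (Om : lmodType C) (star : A -> A)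
  (lact : A -> Om -> Om) (ract : Om -> A -> Om) (b : Om) (g : A) : Om :=
  lact (star g) b.

(* d^dagger f := - \bar{ d (star f) }, represented in the carrier of Om. *)
Definition dagger (A : algType C) (Om : lmodType C) (star : A -> A)
  (d : A -> Om) (f : A) : Om := - d (star f).

(* A linear map omega : Om (x)_C \bar{Om} -> C is the same as a C-bilinear
   map Om x \bar{Om} -> C; in terms of the carrier of Om, omega a b is
   C-linear in a and C-linear in \bar b, i.e. conjugate-linear in b. *)
Definition is_bilinear_conj (Om : lmodType C) (omega : Om -> Om -> C) : Prop :=
  [/\ (forall a a' b, omega (a + a') b = omega a b + omega a' b),
      (forall (c : C) a b, omega (c *: a) b = c * omega a b),
      (forall a b b', omega a (b + b') = omega a b + omega a b') &
      (forall (c : C) a b, omega a (c *: b) = c^* * omega a b)].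

Definition Psi (A : algType C) (Om : lmodType C) (star : A -> A)
  (d : A -> Om) (omega : Om -> Om -> C) (f g : A) : C :=
  omega (d f) (dagger star d g) - omega (d g) (dagger star d f).

End Defs.

From HB Require Import structures.
From mathcomp Require Import all_boot all_order all_algebra.
From mathcomp Require Import reals complex.
From mathcomp Require Import ring.
Import GRing.Theory Num.Theory.
Local Open Scope ring_scope.

(* The invariance of omega lets every algebra element be moved from the first
   slot to the second one, where it acts through star.  After this, the
   Leibniz rule expands Psi (f g, h) into four terms of the two shapes
   omega (d a, lact (star b) (d (star c))) and
   omega (d a, ract (d (star c)) (star b)), and in the cyclic sum over
   (f, g, h) each such term occurs once with each sign. *)

Section CyclicCocycle.

Variable R : realType.
Variables (A : algType R[i]) (star : A -> A) (Om : lmodType R[i]).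
Variables (lact : A -> Om -> Om) (ract : Om -> A -> Om).
Variables (d : A -> Om) (omega : Om -> Om -> R[i]).

Hypothesis starM : forall a b, star (a * b) = star b * star a.
Hypothesis star1 : star 1 = 1.
Hypothesis lact1 : forall b, lact 1 b = b.
Hypothesis ract1 : forall b, ract b 1 = b.
Hypothesis dM : forall f g, d (f * g) = lact f (d g) + ract (d f) g.
Hypothesis omegaDl : forall a a' b, omega (a + a') b = omega a b + omega a' b.
Hypothesis omegaDr : forall a b b', omega a (b + b') = omega a b + omega a b'.
Hypothesis omega_inv : forall a b f g,
  omega (lact f (ract a g)) b = omega a (lact (star f) (ract b (star g))).

Lemma omega0r a : omega a 0 = 0.
Proof. by apply/(addrI (omega a 0)); rewrite -omegaDr !addr0. Qed.

Lemma omegaNr a b : omega a (- b) = - omega a b.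
Proof. by apply/(addrI (omega a b)); rewrite -omegaDr !subrr omega0r. Qed.

Lemma omega_lact f a b : omega (lact f a) b = omega a (lact (star f) b).
Proof. by rewrite -[a in LHS]ract1 omega_inv star1 ract1. Qed.

Lemma omega_ract g a b : omega (ract a g) b = omega a (ract b (star g)).
Proof. by rewrite -[ract a g]lact1 omega_inv star1 lact1. Qed.

Lemma Psi_mulE f g h :
  Psi star d omega (f * g) h =
    omega (d h) (lact (star g) (d (star f)))
  + omega (d h) (ract (d (star g)) (star f))
  - omega (d g) (lact (star f) (d (star h)))
  - omega (d f) (ract (d (star h)) (star g)).
Proof.
rewrite /Psi /dagger starM !dM !omegaNr omegaDl omegaDr.
by rewrite omega_lact omega_ract opprK addrC opprD addrA.
Qed.

Lemma Psi_cyclic f0 f1 f2 :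
  Psi star d omega (f0 * f1) f2 + Psi star d omega (f1 * f2) f0
    + Psi star d omega (f2 * f0) f1 = 0.
Proof.
rewrite !Psi_mulE.
(* ring is very slow unless the six omega terms are abstracted first. *)
by do 6!move: (omega _ _) => ?; ring.
Qed.

End CyclicCocycle.

Theorem mainTheorem1 (R : realType) (A : algType R[i]) (star : A -> A)
  (Om : lmodType R[i]) (lact : A -> Om -> Om) (ract : Om -> A -> Om)
  (d : {linear A -> Om}) (omega : Om -> Om -> R[i]) :
  is_star star ->
  is_bimodule lact ract ->
  is_derivation lact ract d ->
  is_bilinear_conj omega ->
  (forall (alpha alpha' : Om) (f g : A),
     omega (lact f (ract alpha g)) alpha' =
     omega alpha (conj_ract star lact ract (conj_lact star lact ract g alpha') f)) ->
  forall f0 f1 f2 : A,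
    Psi star d omega (f0 * f1) f2 + Psi star d omega (f1 * f2) f0
      + Psi star d omega (f2 * f0) f1 = 0.
Proof.
move=> [_ _ starM star1 _] [_ [_ [_ [_ [_ [lact1 [_ [_ [_ [_ [_ [ract1 _]]]]]]]]]]]]
  dM [omegaDl _ omegaDr _] omega_inv.
exact: Psi_cyclic.
Qed.
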